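(* Let $\mathbf{A}$ be the $6\times 3$ matrix with rows $(1,1,0),(1,1,0),(1,0,1),(1,0,1),(0,1,1),(0,1,1)$, and $\mathbf{B}$ the $6\times 8$ matrix with rows $(1,1,1,0,0,1,0,0)$, $(1,0,0,1,1,1,0,0)$, $(1,1,0,1,0,0,1,0)$, $(1,0,1,0,1,0,1,0)$, $(1,1,0,0,1,0,0,1)$, $(1,0,1,1,0,0,0,1)$. Let $\mathbf{L}$ be the $8\times 15$ matrix whose first six rows form the block $(\mathbf{A}\mid \mathbf{I}_6\mid \mathbf{I}_6)$, whose seventh row is all ones and whose eighth row is all zeros; let $\mathbf{R}$ be the $8\times 15$ matrix whose first six rows form $(\mathbf{B}\mid \mathbf{O}_{6\times 7})$, whose seventh row is all ones and whose eighth row is all zeros. Then $(\mathbf{L},\mathbf{R})$ is centered and $\mathbf{L}\preceq^{\mathrm{PC}}\mathbf{R}$, but $(\mathbf{L},\mathbf{R})$ admits no dominance map.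
   Context: $\mathbf{I}_6$ is the $6\times6$ identity matrix and $\mathbf{O}_{6\times7}$ the zero matrix. $\mathbf{A}_{(i)}$ is the $i$-th row; $e$ the all-ones row vector; $|v|=\sum_k|v_k|$; $\le$ between vectors is componentwise. A pair of $(0,1)$-matrices with the same number of rows, having a common all-zero row, is centered if $|\mathbf{L}_{(i)}|=|\mathbf{R}_{(i)}|$ for all $i$ and some row satisfies $\mathbf{L}_{(i)}=e=\mathbf{R}_{(i)}$. A dominance map is $f:\{0,1\}^{m}\to\{0,1\}^{m}$ ($m$ the common number of columns) with $|u|=|f(u)|$ and $\mathbf{L}u^T\le\mathbf{R}f(u)^T$ for all $u$. $\mathbf{L}\preceq^{\mathrm{PC}}\mathbf{R}$ means $v\mathbf{L}\preceq v\mathbf{R}$ for all $v\in\mathbb{R}_{\ge0}^{8}$, where for $x,y\in\mathbb{R}^d$, $x\preceq y$ means $\sum_{n=1}^k x^\downarrow_n\le\sum_{n=1}^k y^\downarrow_n$ for $k<d$ and equal total sums, $x^\downarrow_n$ being the $n$-th largest component. *)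

From HB Require Import structures.
From mathcomp Require Import all_boot all_order all_algebra.
From mathcomp Require Import reals.
Set Implicit Arguments. Unset Strict Implicit. Unset Printing Implicit Defensive.
Import Order.TTheory GRing.Theory Num.Theory.
Local Open Scope ring_scope.

Definition Aseq : seq (seq nat) :=
  [:: [:: 1; 1; 0]%N; [:: 1; 1; 0]%N; [:: 1; 0; 1]%N;
      [:: 1; 0; 1]%N; [:: 0; 1; 1]%N; [:: 0; 1; 1]%N].

Definition Bseq : seq (seq nat) :=
  [:: [:: 1; 1; 1; 0; 0; 1; 0; 0]%N;
      [:: 1; 0; 0; 1; 1; 1; 0; 0]%N;
      [:: 1; 1; 0; 1; 0; 0; 1; 0]%N;
      [:: 1; 0; 1; 0; 1; 0; 1; 0]%N;
      [:: 1; 1; 0; 0; 1; 0; 0; 1]%N;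
      [:: 1; 0; 1; 1; 0; 0; 0; 1]%N].

(* L: rows 0..5 = (A | I_6 | I_6), row 6 = all ones, row 7 = all zeros *)
Definition Lentry (i j : nat) : nat :=
  if (i < 6)%N then
    (if (j < 3)%N then nth 0%N (nth [::] Aseq i) j
     else if (j < 9)%N then nat_of_bool (i == j - 3)%N
     else nat_of_bool (i == j - 9)%N)
  else if i == 6%N then 1%N else 0%N.

Definition Rentry (i j : nat) : nat :=
  if (i < 6)%N then
    (if (j < 8)%N then nth 0%N (nth [::] Bseq i) j else 0%N)
  else if i == 6%N then 1%N else 0%N.

Definition Lmx (T : nzSemiRingType) : 'M[T]_(8, 15) :=
  \matrix_(i < 8, j < 15) (Lentry i j)%:R.
Definition Rmx (T : nzSemiRingType) : 'M[T]_(8, 15) :=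
  \matrix_(i < 8, j < 15) (Rentry i j)%:R.

Definition row01 {m n : nat} (M : 'M[nat]_(m, n)) : Prop :=
  forall i j, M i j = 0%N \/ M i j = 1%N.

Definition rowsum {m n : nat} (M : 'M[nat]_(m, n)) (i : 'I_m) : nat :=
  (\sum_(j < n) M i j)%N.

Definition centered {m n : nat} (L R : 'M[nat]_(m, n)) : Prop :=
  [/\ row01 L, row01 R,
      (exists i, forall j, L i j = 0%N /\ R i j = 0%N),
      (forall i, rowsum L i = rowsum R i) &
      (exists i, forall j, L i j = 1%N /\ R i j = 1%N)].

Definition bvec {n : nat} (u : {ffun 'I_n -> bool}) : 'cV[nat]_n :=
  \col_(j < n) nat_of_bool (u j).

Definition bnorm {n : nat} (u : {ffun 'I_n -> bool}) : nat :=
  (\sum_(j < n) nat_of_bool (u j))%N.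

Definition dominance_map {m n : nat} (L R : 'M[nat]_(m, n))
    (f : {ffun 'I_n -> bool} -> {ffun 'I_n -> bool}) : Prop :=
  forall u, bnorm u = bnorm (f u) /\
    (forall i, ((L *m bvec u) i ord0 <= (R *m bvec (f u)) i ord0)%N).

Definition has_dominance_map {m n : nat} (L R : 'M[nat]_(m, n)) : Prop :=
  exists f, dominance_map L R f.

Definition decr {R : realType} {d : nat} (x : 'rV[R]_d) : seq R :=
  sort (fun a b => b <= a) [seq x 0 j | j <- enum 'I_d].

Definition majorized {R : realType} {d : nat} (x y : 'rV[R]_d) : Prop :=
  (forall k : nat, (k < d)%N ->
     \sum_(n < k) nth 0 (decr x) n <= \sum_(n < k) nth 0 (decr y) n) /\
  \sum_(j < d) x 0 j = \sum_(j < d) y 0 j.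

Definition PC_le {R : realType} {m n : nat} (L M : 'M[R]_(m, n)) : Prop :=
  forall v : 'rV[R]_m, (forall i, 0 <= v 0 i) -> majorized (v *m L) (v *m M).

From HB Require Import structures.
From mathcomp Require Import all_boot all_order all_algebra.
From mathcomp Require Import reals.
Set Implicit Arguments. Unset Strict Implicit. Unset Printing Implicit Defensive.
Import Order.TTheory GRing.Theory Num.Theory.
Local Open Scope ring_scope.

(* Both sides of the PC order are governed by sums of the k largest entries,
   and such a sum is the largest sum of x over a k-subset of coordinates.
   Hence L ⪯PC R as soon as, for every 0/1 vector u of weight k, some
   nonempty family of weight-k vectors w satisfies
   |family| · L u ≤ Σ_w R w componentwise: averaging over the family turns
   v L u into a mean of the v R w, each bounded by the top-k sum of v R.
   For the given matrices this is a finite check over 2^15 vectors u; every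
   u except the indicator of the first three columns is dominated by a single
   w, and that u is dominated only by an average of two, which is also why no
   dominance map exists. *)

Lemma sum_take_le_sorted (R : realDomainType) (s t : seq R) k :
  sorted >=%R t -> perm_eq s t ->
  \sum_(a <- take k s) a <= \sum_(a <- take k t) a.
Proof.
elim: t s k => [|a t IHt] s k; first by move=> _ /perm_nilP ->.
rewrite /= (path_sortedE ge_trans) => /andP[/allP a_ge t_sorted] st.
have a_s : a \in s by rewrite (perm_mem st) mem_head.
move: st; case/splitPr: a_s => s1 s2; rewrite -cat1s perm_catCA /= perm_cons => s12t.
case: k => [|k]; first by rewrite !take0.
rewrite [take k.+1 _]/= big_cons.
have [s1_le|k_lt] := leqP (size s1) k.
  rewrite take_cat ltnNge (leq_trans s1_le (leqnSn _)) subSn //= big_cat big_cons /=.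
  move: (IHt _ k t_sorted s12t); rewrite take_cat ltnNge s1_le /= big_cat /=.
  by rewrite addrCA lerD2l.
rewrite takel_cat // -(takel_cat s2 k_lt).
have k_lt_t : (k < size t)%N.
  by rewrite -(perm_size s12t) size_cat (leq_trans k_lt) ?leq_addr.
apply: le_trans (IHt _ k.+1 t_sorted s12t) _.
rewrite (take_nth 0 k_lt_t) -cats1 big_cat big_seq1 /= addrC lerD2r.
by apply: a_ge; rewrite mem_nth.
Qed.

Lemma big_nth_take (R : nmodType) (s : seq R) k : (k <= size s)%N ->
  \sum_(n < k) nth 0 s n = \sum_(a <- take k s) a.
Proof.
move=> k_le; rewrite (big_nth 0) size_takel // big_mkord.
by apply: eq_bigr => i _; rewrite nth_take.
Qed.

Section TopSums.
Variables (R : realType) (d : nat) (x : 'rV[R]_d).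

Local Notation top k := (\sum_(n < k) nth 0 (decr x) n).

Lemma sum_subset_le_top (u : {ffun 'I_d -> bool}) :
  \sum_(j | u j) x 0 j <= top (bnorm u).
Proof.
pose s := [seq x 0 j | j <- [seq j <- enum 'I_d | u j] ++ [seq j <- enum 'I_d | ~~ u j]].
have size_u : size [seq j <- enum 'I_d | u j] = bnorm u.
  by rewrite size_filter -sumn_count sumnE big_map big_enum.
have -> : \sum_(j | u j) x 0 j = \sum_(a <- take (bnorm u) s) a.
  by rewrite /s map_cat take_size_cat ?size_map // big_map big_filter big_enum_cond.
have bnorm_le : (bnorm u <= size (decr x))%N.
  by rewrite -size_u size_sort size_map size_filter count_size.
rewrite (big_nth_take bnorm_le); apply: sum_take_le_sorted.
  by apply: sort_sorted => a b; exact: le_total.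
by rewrite perm_sym /decr perm_sort perm_sym; apply: perm_map; apply/permPl; exact: perm_filterC.
Qed.

Lemma top_attained k : (k <= d)%N ->
  exists u : {ffun 'I_d -> bool}, bnorm u = k /\ top k = \sum_(j | u j) x 0 j.
Proof.
move=> k_le; set S := take k (sort (relpre (x 0) >=%R) (enum 'I_d)).
have S_uniq : uniq S by rewrite take_uniq // sort_uniq enum_uniq.
exists [ffun j => j \in S]; split.
  rewrite /bnorm (eq_bigr (fun j => (j \in S : nat))) => [|j _]; last by rewrite ffunE.
  rewrite -big_mkcond sum1_card (card_uniqP S_uniq) size_takel //.
  by rewrite size_sort size_enum_ord.
rewrite big_nth_take; last by rewrite size_sort size_map size_enum_ord.
rewrite /decr sort_map -map_take big_map big_uniq //.
by apply: eq_bigl => j; rewrite ffunE.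
Qed.

End TopSums.

Lemma mulmx_bvec_sum m n (N : 'M[nat]_(m, n)) (u : {ffun 'I_n -> bool}) i :
  (N *m bvec u) i ord0 = (\sum_(j | u j) N i j)%N.
Proof.
rewrite mxE [RHS]big_mkcond; apply: (@eq_bigr nat 0%N addn) => j _.
by rewrite mxE; case: (u j); [exact: muln1 | exact: muln0].
Qed.

Section AverageDominance.
Variables (R : realType) (m n : nat).

Local Notation realmx N := (map_mx (fun k : nat => k%:R : R) N).

Lemma sum_mulmx_subset (v : 'rV[R]_m) (N : 'M[nat]_(m, n)) (u : {ffun 'I_n -> bool}) :
  \sum_(j | u j) (v *m realmx N) 0 j = \sum_i v 0 i * ((N *m bvec u) i ord0)%:R.
Proof.
under eq_bigr do rewrite mxE.
rewrite exchange_big /=; apply: eq_bigr => i _.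
by rewrite mulmx_bvec_sum natr_sum mulr_sumr; apply: eq_bigr => j _; rewrite mxE.
Qed.

Lemma sum_mulmx (v : 'rV[R]_m) (N : 'M[nat]_(m, n)) :
  \sum_j (v *m realmx N) 0 j = \sum_i v 0 i * (rowsum N i)%:R.
Proof.
rewrite (eq_bigl (fun j => [ffun=> true] j)) => [|j]; last by rewrite ffunE.
rewrite sum_mulmx_subset; apply: eq_bigr => i _; rewrite mulmx_bvec_sum.
by congr (_ * _%:R); apply: eq_bigl => j; rewrite ffunE.
Qed.

Lemma PC_le_of_average_dominance (L M : 'M[nat]_(m, n)) :
  (forall i, rowsum L i = rowsum M i) ->
  (forall u, exists2 ws : seq {ffun 'I_n -> bool}, (0 < size ws)%N &
     (forall w, w \in ws -> bnorm w = bnorm u) /\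
     (forall i, size ws * (L *m bvec u) i ord0 <= \sum_(w <- ws) (M *m bvec w) i ord0)%N) ->
  PC_le (realmx L) (realmx M).
Proof.
move=> rowsumLM avg_dom v v_ge0; split => [k k_lt|].
  have [u [<- ->]] := top_attained (v *m realmx L) (ltnW k_lt).
  have [ws ws_gt0 [bnorm_ws dom_ws]] := avg_dom u.
  have ws_pos : 0 < (size ws)%:R :> R by rewrite ltr0n.
  rewrite -(ler_pM2l ws_pos) sum_mulmx_subset mulr_sumr.
  apply: le_trans (_ : \sum_(w <- ws) \sum_(j | w j) (v *m realmx M) 0 j <= _).
    under [X in _ <= X]eq_bigr do rewrite sum_mulmx_subset.
    rewrite exchange_big /=; apply: ler_sum => i _.
    rewrite -mulr_sumr -natr_sum mulrCA -natrM ler_wpM2l // ler_nat.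
    exact: dom_ws.
  rewrite mulr_natl -iter_addr_0 -(count_predT ws) -big_const_seq big_seq [X in _ <= X]big_seq.
  by apply: ler_sum => w w_ws; rewrite -(bnorm_ws w w_ws) sum_subset_le_top.
by rewrite !sum_mulmx; apply: eq_bigr => i _; rewrite rowsumLM.
Qed.
End AverageDominance.

Local Close Scope ring_scope.

Fixpoint bitseqs (n : nat) : seq bitseq :=
  if n is n'.+1 then [seq b :: s | b <- [:: true; false], s <- bitseqs n'] else [:: [::]].

Lemma mem_bitseqs n b : size b = n -> b \in bitseqs n.
Proof.
elim: n b => [|n IHn] [|x b] //= [/IHn b_in].
by case: x; rewrite !mem_cat map_f ?orbT.
Qed.

Lemma codom_nth_ffun n (b : bitseq) :
  size b = n -> codom [ffun j : 'I_n => nth false b j] = b.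
Proof.
move=> <-; rewrite codomE (eq_map (g := nth false b \o val)) => [|j]; last by rewrite ffunE.
by rewrite map_comp val_enum_ord -/(mkseq _ _) mkseq_nth.
Qed.

Lemma bnorm_count n (u : {ffun 'I_n -> bool}) : bnorm u = count id (codom u).
Proof. by rewrite codomE count_map -sumn_count sumnE big_map big_enum. Qed.

Lemma all_iota_ord n (P : pred nat) : all P (iota 0 n) -> forall i : 'I_n, P i.
Proof. by move=> /allP P_all i; apply: P_all; rewrite mem_iota ltn_ord. Qed.

Definition mulmx_bits (E : nat -> nat -> nat) (b : bitseq) : seq nat :=
  [seq sumn [seq (if p.2 then E i p.1 else 0) | p <- zip (iota 0 15) b] | i <- iota 0 8].

Lemma mulmx_bvecE (E : nat -> nat -> nat) (N : 'M[nat]_(8, 15)) u i :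
  (forall i j, N i j = E i j) -> (N *m bvec u)%R i ord0 = nth 0 (mulmx_bits E (codom u)) i.
Proof.
move=> NE; rewrite mulmx_bvec_sum (nth_map 0) ?size_iota // nth_iota // codomE.
rewrite -val_enum_ord zip_map -map_comp sumnE big_map big_enum big_mkcond /=.
by apply: eq_bigr => j _; rewrite NE.
Qed.

Lemma Lmx_nat i j : Lmx nat i j = Lentry i j. Proof. by rewrite mxE natn. Qed.
Lemma Rmx_nat i j : Rmx nat i j = Rentry i j. Proof. by rewrite mxE natn. Qed.

Lemma Lmx_map (T : nzSemiRingType) : Lmx T = map_mx (fun k => k%:R%R) (Lmx nat).
Proof. by apply/matrixP => i j; rewrite !mxE natn. Qed.
Lemma Rmx_map (T : nzSemiRingType) : Rmx T = map_mx (fun k => k%:R%R) (Rmx nat).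
Proof. by apply/matrixP => i j; rewrite !mxE natn. Qed.

Definition dominates (c D : seq nat) : bool :=
  all (fun i => nth 0 c i <= nth 0 D i) (iota 0 8).

Lemma dominatesP c D : reflect (forall i : 'I_8, nth 0 c i <= nth 0 D i) (dominates c D).
Proof.
apply: (iffP allP) => [c_le i | c_le i]; first by apply: c_le; rewrite mem_iota ltn_ord.
by rewrite mem_iota => /andP[_ i_lt]; exact: c_le (Ordinal i_lt).
Qed.

Definition total_image (Js : seq bitseq) : seq nat :=
  [seq sumn [seq nth 0 (mulmx_bits Rentry J) i | J <- Js] | i <- iota 0 8].

Lemma nth_total_image Js (i : 'I_8) :
  nth 0 (total_image Js) i = \sum_(J <- Js) nth 0 (mulmx_bits Rentry J) i.
Proof. by rewrite (nth_map 0) ?size_iota // nth_iota // sumnE big_map. Qed.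

(* [R *m bvec w] depends on [w] only through its first eight entries and its
   weight, so for weight [k] it suffices to fill the columns of B first. *)
Definition candidates (k : nat) : seq bitseq :=
  [seq P ++ mkseq (fun j => j < k - 8) 7 | P <- bitseqs 8 & count id P == minn k 8].

(* [L *m bvec cols012 = (2,2,2,2,2,2,3,0)] is dominated by no single [R *m bvec w],
   only by the average of [R *m bvec cols012 = (3,1,2,2,2,2,3,0)] and
   [R *m bvec cols034 = (1,3,2,2,2,2,3,0)]. *)
Definition cols012 : bitseq := mkseq (fun j => j < 3) 15.
Definition cols034 : bitseq := mkseq (fun j => j \in [:: 0; 3; 4]) 15.

Definition families (k : nat) : seq (seq bitseq) :=
  [seq [:: J] | J <- candidates k] ++ [:: [:: cols012; cols034]].

Definition certifies (k : nat) (c : seq nat) (F : seq bitseq * seq nat) : bool :=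
  [&& 0 < size F.1, all (fun J => (size J == 15) && (count id J == k)) F.1 &
      dominates [seq size F.1 * x | x <- c] F.2].

(* The [let] makes [vm_compute] build the table of families and images once. *)
Lemma bitseqs_averagely_dominated :
  let certs := [seq [seq (Js, total_image Js) | Js <- families k] | k <- iota 0 16] in
  all (fun b => has (certifies (count id b) (mulmx_bits Lentry b)) (nth [::] certs (count id b)))
      (bitseqs 15).
Proof. by vm_compute. Qed.

Lemma cols012_undominated :
  ~~ has (fun w => (count id w == 3) && dominates (mulmx_bits Lentry cols012) (mulmx_bits Rentry w))
         (bitseqs 15).
Proof. by vm_compute. Qed.

Lemma rowsum_mulmx_bits (E : nat -> nat -> nat) (N : 'M[nat]_(8, 15)) i :
  (forall i j, N i j = E i j) -> rowsum N i = nth 0 (mulmx_bits E (nseq 15 true)) i.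
Proof.
move=> NE; have ones : [ffun=> true] = [ffun j : 'I_15 => nth false (nseq 15 true) j].
  by apply/ffunP => j; rewrite !ffunE nth_nseq ltn_ord.
rewrite -(codom_nth_ffun (size_nseq 15 true)) -ones -(mulmx_bvecE _ _ NE) mulmx_bvec_sum.
by apply: eq_bigl => j; rewrite ffunE.
Qed.

Lemma rowsum_LR i : rowsum (Lmx nat) i = rowsum (Rmx nat) i.
Proof.
rewrite (rowsum_mulmx_bits _ Lmx_nat) (rowsum_mulmx_bits _ Rmx_nat).
by have -> : mulmx_bits Lentry (nseq 15 true) = mulmx_bits Rentry (nseq 15 true).
Qed.

Lemma entries_le1 (i : 'I_8) (j : 'I_15) : (Lentry i j <= 1) && (Rentry i j <= 1).
Proof.
have entries : all (fun i => all (fun j => (Lentry i j <= 1) && (Rentry i j <= 1))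
                                 (iota 0 15)) (iota 0 8) by [].
exact: all_iota_ord (all_iota_ord entries i) j.
Qed.

Lemma leq1_eq01 k : k <= 1 -> k = 0 \/ k = 1.
Proof. by case: k => [|[|]]; auto. Qed.

Lemma centered_LR : centered (Lmx nat) (Rmx nat).
Proof.
split.
- by move=> i j; rewrite Lmx_nat; apply: leq1_eq01; case/andP: (entries_le1 i j).
- by move=> i j; rewrite Rmx_nat; apply: leq1_eq01; case/andP: (entries_le1 i j).
- by exists ord_max => j; rewrite Lmx_nat Rmx_nat.
- exact: rowsum_LR.
- by exists (inord 6) => j; rewrite Lmx_nat Rmx_nat inordK.
Qed.

Lemma average_dominance_LR (u : {ffun 'I_15 -> bool}) :
  exists2 ws : seq {ffun 'I_15 -> bool}, 0 < size ws &
    (forall w, w \in ws -> bnorm w = bnorm u) /\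
    (forall i, size ws * (Lmx nat *m bvec u)%R i ord0 <=
               \sum_(w <- ws) (Rmx nat *m bvec w)%R i ord0).
Proof.
have size_u : size (codom u) = 15 by rewrite size_codom card_ord.
have k_lt : count id (codom u) < 16 by rewrite ltnS -[X in _ <= X]size_u count_size.
have /hasP[F] := allP bitseqs_averagely_dominated _ (mem_bitseqs size_u).
rewrite (nth_map 0) ?size_iota // nth_iota //= => /mapP[Js _ ->{F}] /and3P[Js_gt0 Js_ok /dominatesP dom].
exists [seq [ffun j : 'I_15 => nth false J j] | J <- Js]; rewrite size_map //; split.
  move=> _ /mapP[J J_Js ->]; have /andP[/eqP size_J /eqP count_J] := allP Js_ok J J_Js.
  by rewrite !bnorm_count codom_nth_ffun.
move=> i; have := dom i; rewrite [(Js, _).1]/= [(Js, _).2]/=.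
rewrite (nth_map 0) ?size_map ?size_iota // nth_total_image (mulmx_bvecE _ _ Lmx_nat).
move=> /leq_trans; apply; rewrite big_map big_seq [X in _ <= X]big_seq.
apply: eq_leq; apply: eq_bigr => J J_Js.
have /andP[/eqP size_J _] := allP Js_ok J J_Js.
by rewrite (mulmx_bvecE _ _ Rmx_nat) codom_nth_ffun.
Qed.

Lemma PC_le_LR (R : realType) : PC_le (Lmx R) (Rmx R).
Proof.
rewrite Lmx_map Rmx_map.
exact: PC_le_of_average_dominance rowsum_LR average_dominance_LR.
Qed.

Lemma no_dominance_map_LR : ~ has_dominance_map (Lmx nat) (Rmx nat).
Proof.
case=> f f_dom; pose u := [ffun j : 'I_15 => nth false cols012 j].
have [bnorm_fu dom_fu] := f_dom u.
have codom_u : codom u = cols012 by rewrite codom_nth_ffun ?size_mkseq.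
move/negP: cols012_undominated; apply; apply/hasP; exists (codom (f u)).
  by apply: mem_bitseqs; rewrite size_codom card_ord.
rewrite -bnorm_count -bnorm_fu bnorm_count codom_u eqxx /=.
apply/dominatesP => i.
by have := dom_fu i; rewrite (mulmx_bvecE _ _ Lmx_nat) (mulmx_bvecE _ _ Rmx_nat) codom_u.
Qed.

Theorem mainTheorem9 :
  centered (Lmx nat) (Rmx nat) /\
  (forall R : realType, PC_le (Lmx R) (Rmx R)) /\
  ~ has_dominance_map (Lmx nat) (Rmx nat).
Proof. by split; [exact: centered_LR | split; [exact: PC_le_LR | exact: no_dominance_map_LR]]. Qed.
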